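(* Let $\mathcal{M}$ be the class of Borel probability measures on $\mathbb{R}$ with non-negative mean, unit variance and finite third moment, and let $\mathcal{D}$ be the discretely supported Borel probability measures on $\mathbb{R}$. For $P\in\mathcal{M}\cup\mathcal{D}$ and $\boldsymbol{z}=(z_1,z_2,\dots)\in\mathbb{R}^\infty$ let $T_k(\boldsymbol z,P)=\sqrt k\big(\max\{k^{-1}\sum_{i=1}^kz_i,0\}-\max\{E_P[Z],0\}\big)$ and let $\psi_k(P)$ be the law of $T_k(\boldsymbol z,P)$ when $\boldsymbol z$ is drawn from the product measure $P^\infty$. Then for any $k\in\mathbb{N}$ and any $P,Q\in\mathcal{M}\cup\mathcal{D}$, $$\|\psi_k(P)-\psi_k(Q)\|_{LB}\le2\sqrt k\,\mathcal{W}(P,Q).$$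
   Context: $LB$ is the class of real-valued functions bounded by one and Lipschitz with constant one, and for probability measures $\mu,\nu$ on $\mathbb{R}$, $\|\mu-\nu\|_{LB}=\sup_{f\in LB}|\int fd\mu-\int fd\nu|$. $\mathcal{W}(P,Q)=\inf_{\zeta\in H(P,Q)}\int|z-z'|\zeta(dz,dz')$ is the Wasserstein-1 distance, $H(P,Q)$ being the set of Borel probability measures on $\mathbb{R}^2$ with marginals $P$ and $Q$. *)

From HB Require Import structures.
From mathcomp Require Import all_boot all_order all_algebra.
From mathcomp Require Import all_classical all_reals all_analysis.


Import Order.TTheory GRing.Theory Num.Theory.
Import numFieldNormedType.Exports.

Local Open Scope classical_set_scope.
Local Open Scope ring_scope.

Section Defs.
Context {R : realType}.

(* mean E_P[Z] of a probability measure on R (as a real number; when the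
   mean is finite this is exactly E_P[Z]) *)
Definition mean (P : probability R R) : R := fine (\int[P]_x x%:E)%E.

Definition inM (P : probability R R) : Prop :=
  [/\ (\int[P]_x (`|x| ^+ 3)%:E < +oo)%E,
      0 <= mean P &
      (\int[P]_x ((x - mean P) ^+ 2)%:E = 1)%E].

Definition inD (P : probability R R) : Prop :=
  exists S : set R, countable S /\ P S = 1%E.

Definition inMD (P : probability R R) : Prop := inM P \/ inD P.

Fixpoint prodk (P : probability R R) (k : nat) : set (k.-tuple R) -> \bar R :=
  match k return set (k.-tuple R) -> \bar R with
  | 0 => \d_([tuple] : 0.-tuple R)
  | n.+1 => pushforward (P \x prodk P n)%E
              (fun p : R * n.-tuple R => [tuple of p.1 :: p.2])
  end.

(* T_k(z, P), which only depends on the first k coordinates of z *)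
Definition Tk (k : nat) (P : probability R R) (z : k.-tuple R) : R :=
  Num.sqrt (k%:R) *
  (Num.max ((k%:R)^-1 * \sum_(i < k) tnth z i) 0 - Num.max (mean P) 0).

(* psi_k(P): the law of T_k(z,P) for z ~ P^infty (equivalently z ~ P^k) *)
Definition psik (k : nat) (P : probability R R) : set R -> \bar R :=
  pushforward (prodk P k) (Tk k P).

Definition LB (f : R -> R) : Prop :=
  (forall x, `|f x| <= 1) /\ (forall x y, `|f x - f y| <= `|x - y|).

Definition LBdist (mu nu : set R -> \bar R) : \bar R :=
  ereal_sup [set `| (\int[mu]_x (f x)%:E - \int[nu]_x (f x)%:E)%E |%E
            | f in LB].

Definition coupling (P Q : probability R R) (zeta : probability (R * R)%type R)
  : Prop :=
  (forall A : set R, measurable A -> zeta (fst @^-1` A) = P A) /\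
  (forall A : set R, measurable A -> zeta (snd @^-1` A) = Q A).

Definition W1 (P Q : probability R R) : \bar R :=
  ereal_inf [set (\int[zeta]_z (`|z.1 - z.2|)%:E)%E
            | zeta in coupling P Q].

End Defs.

(* Fix f in LB and a coupling zeta of P and Q, and insert E_{Q^k} f(T_k(., P))
   between E_{P^k} f(T_k(., P)) and E_{Q^k} f(T_k(., Q)).  The map
   z |-> f(T_k(z, P)) is (sqrt k / k)-Lipschitz for the l1 distance on R^k, so
   replacing the k coordinates drawn from P by coordinates drawn from Q one at a
   time, each along zeta, moves its expectation by at most
   sqrt k * E_zeta|z1 - z2|.  The statistics T_k(., P) and T_k(., Q) differ by
   the constant sqrt k * |max(E_P Z, 0) - max(E_Q Z, 0)|, and
   |E_P Z - E_Q Z| <= E_zeta|z1 - z2| as well.  Taking the infimum over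
   couplings gives the bound. *)

From HB Require Import structures.
From mathcomp Require Import all_boot all_order all_algebra.
From mathcomp Require Import all_classical all_reals all_analysis.
From mathcomp Require Import measurable_realfun lra.

Import Order.TTheory GRing.Theory Num.Theory.
Import numFieldNormedType.Exports.
Local Open Scope classical_set_scope.
Local Open Scope ring_scope.

Section BoundedIntegrals.
Context {R : realType} {d : measure_display} {T : measurableType d}.
Variable mu : probability T R.

Lemma bounded_integrable {f : T -> R} {M : R} :
  measurable_fun setT f -> (forall x, `|f x| <= M) ->
  mu.-integrable setT (EFin \o f).
Proof.
move=> mf fM; apply: measurable_bounded_integrable => //.
  exact: le_lt_trans (probability_le1 mu measurableT) (ltry 1).
exists M; split; first exact: num_real.
by move=> N MN x _ /=; apply: le_trans (fM x) _; exact: ltW.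
Qed.

Lemma normr_Rintegral_le {f : T -> R} {M : R} :
  measurable_fun setT f -> (forall x, `|f x| <= M) -> `|\int[mu]_x f x| <= M.
Proof.
move=> mf fM.
have intf := bounded_integrable mf fM.
apply: le_trans (le_normr_Rintegral measurableT intf) _.
have intM : mu.-integrable setT (EFin \o cst M).
  by apply: (@bounded_integrable (cst M) `|M|).
apply: le_trans (le_Rintegral measurableT (integrable_norm intf) intM
  (fun x _ => fM x)) _.
rewrite Rintegral_cst // (_ : fine _ = 1) ?mulr1 //.
exact: (congr1 fine (probability_setT mu)).
Qed.

Lemma dist_Rintegral_le {f g : T -> R} {M e : R} :
  measurable_fun setT f -> measurable_fun setT g ->
  (forall x, `|f x| <= M) -> (forall x, `|g x| <= M) ->
  (forall x, `|f x - g x| <= e) ->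
  `|\int[mu]_x f x - \int[mu]_x g x| <= e.
Proof.
move=> mf mg fM gM fge.
rewrite -RintegralB //; last 2 first.
- exact: bounded_integrable fM.
- exact: bounded_integrable gM.
exact: normr_Rintegral_le (measurable_funB mf mg) fge.
Qed.

End BoundedIntegrals.

Lemma lipschitz1_continuous {R : realType} (f : R -> R) :
  (forall x y, `|f x - f y| <= `|x - y|) -> continuous f.
Proof.
move=> fL a; apply/cvgrPdist_lt => e e0.
near=> t; apply: le_lt_trans (fL a t) _.
near: t; by apply: cvgr_dist_lt.
Unshelve. all: by end_near.
Qed.

Section ImageMeasure.
Context {R : realType} {d : measure_display} {T : measurableType d}.

Definition has_image (zeta : probability T R) (phi : T -> R)
    (P : probability R R) : Prop :=
  forall A, measurable A -> zeta (phi @^-1` A) = P A.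

Context {zeta : probability T R} {phi : T -> R} {P : probability R R}.
Hypotheses (mphi : measurable_fun setT phi) (zetaP : has_image zeta phi P).

Lemma has_image_integral (h : R -> \bar R) :
  (\int[P]_x h x = \int[pushforward zeta phi]_x h x)%E.
Proof. by apply: eq_measure_integral => A mA _; exact: (esym (zetaP _ mA)). Qed.

Lemma has_image_integral_abs {h : R -> R} : measurable_fun setT h ->
  (\int[P]_x `|(h x)%:E| = \int[zeta]_z `|(h (phi z))%:E|)%E.
Proof.
move=> mh; rewrite has_image_integral ge0_integral_pushforward //.
by apply: (@measurableT_comp _ _ _ _ _ _ abse) => //; exact/measurable_EFinP.
Qed.

Lemma has_image_integrable {h : R -> R} : measurable_fun setT h ->
  P.-integrable setT (EFin \o h) -> zeta.-integrable setT (EFin \o (h \o phi)).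
Proof.
move=> mh /integrableP[_ hfin]; apply/integrableP; split.
  exact/measurable_EFinP/measurableT_comp.
by rewrite -has_image_integral_abs.
Qed.

Lemma has_image_Rintegral {h : R -> R} : measurable_fun setT h ->
  P.-integrable setT (EFin \o h) -> \int[P]_x h x = \int[zeta]_z h (phi z).
Proof.
move=> mh intPh.
rewrite /Rintegral has_image_integral integral_pushforward //.
  exact/measurable_EFinP.
exact: has_image_integrable.
Qed.

End ImageMeasure.

Lemma has_image_integrable_id {R : realType} {d : measure_display}
    {T : measurableType d} {zeta : probability T R} {phi1 phi2 : T -> R}
    {P Q : probability R R} :
  measurable_fun setT phi1 -> measurable_fun setT phi2 ->
  has_image zeta phi1 P -> has_image zeta phi2 Q ->
  (\int[zeta]_z (`|phi1 z - phi2 z|)%:E < +oo)%E ->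
  P.-integrable setT (EFin \o id) -> Q.-integrable setT (EFin \o id).
Proof.
move=> m1 m2 zetaP zetaQ cost_fin /integrableP[_ intP].
apply/integrableP; split; first exact/measurable_EFinP.
rewrite (has_image_integral_abs m2 zetaQ (@measurable_id _ _ setT)).
rewrite (has_image_integral_abs m1 zetaP (@measurable_id _ _ setT)) in intP.
have mB : measurable_fun setT (fun z => (`|phi1 z - phi2 z|)%:E).
  apply/measurable_EFinP; apply: measurableT_comp => //.
  exact: measurable_funB.
have mA : measurable_fun setT (fun z => (`|phi1 z|)%:E).
  exact/measurable_EFinP/measurableT_comp.
apply: (@le_lt_trans _ _
  (\int[zeta]_z ((`|phi1 z|)%:E + (`|phi1 z - phi2 z|)%:E))%E).
  apply: ge0_le_integral => //.
  - apply: (@measurableT_comp _ _ _ _ _ _ abse) => //; exact/measurable_EFinP.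
  - exact: emeasurable_funD.
  - move=> z _; rewrite /= -EFinD lee_fin -[X in `|X|](subrK (phi1 z) (phi2 z)).
    by rewrite addrC (le_trans (ler_normD _ _)) // distrC addrC.
by rewrite ge0_integralD // lte_add_pinfty.
Qed.

Section Couplings.
Context {R : realType}.
Implicit Types (P Q : probability R R) (zeta : probability (R * R)%type R).

Definition transport_cost zeta : \bar R := (\int[zeta]_z (`|z.1 - z.2|)%:E)%E.

Lemma transport_cost_ge0 zeta : (0 <= transport_cost zeta)%E.
Proof. by apply: integral_ge0 => z _; rewrite lee_fin. Qed.

Lemma transport_cost_integrable {zeta} {c : R} : transport_cost zeta = c%:E ->
  zeta.-integrable setT (EFin \o (fun z : R * R => `|z.1 - z.2|)).
Proof.
move=> costE; apply/integrableP; split.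
  apply/measurable_EFinP; apply: measurableT_comp => //.
  exact: measurable_funB.
under eq_integral do rewrite /= normr_id.
by rewrite -/(transport_cost zeta) costE ltry.
Qed.

Lemma coupling_Rintegral_lipschitz {P Q zeta} {h : R -> R} {L c : R} :
  coupling P Q zeta -> transport_cost zeta = c%:E ->
  measurable_fun setT h ->
  P.-integrable setT (EFin \o h) -> Q.-integrable setT (EFin \o h) ->
  (forall x y, `|h x - h y| <= L * `|x - y|) ->
  `|\int[P]_x h x - \int[Q]_x h x| <= L * c.
Proof.
move=> [zetaP zetaQ] costE mh intP intQ hL.
have int1 := has_image_integrable measurable_fst zetaP mh intP.
have int2 := has_image_integrable measurable_snd zetaQ mh intQ.
have intB : zeta.-integrable setT (EFin \o (fun z => h z.1 - h z.2)).
  rewrite (_ : EFin \o _ = (EFin \o (h \o fst)) \- (EFin \o (h \o snd)))%E.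
    exact: integrableB.
  by apply/funext => z /=; rewrite EFinB.
have intcost := transport_cost_integrable costE.
rewrite (has_image_Rintegral measurable_fst zetaP mh intP).
rewrite (has_image_Rintegral measurable_snd zetaQ mh intQ) -RintegralB //.
apply: le_trans (le_normr_Rintegral measurableT intB) _.
have intLcost : zeta.-integrable setT (EFin \o (fun z => L * `|z.1 - z.2|)).
  rewrite (_ : EFin \o _ =
    (fun z => L%:E * (EFin \o (fun z : R * R => `|z.1 - z.2|%R)) z))%E.
    exact: integrableZl.
  by apply/funext => z /=; rewrite EFinM.
have hLz z : `|h z.1 - h z.2| <= L * `|z.1 - z.2| by exact: hL.
apply: le_trans
  (le_Rintegral measurableT (integrable_norm intB) intLcost
    (fun z _ => hLz z)) _.
by rewrite RintegralZl // /Rintegral -/(transport_cost zeta) costE.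
Qed.

Lemma mean_nonintegrable {P} :
  ~ P.-integrable setT (EFin \o id) -> mean P = 0.
Proof.
move=> nintP; rewrite /mean.
suff : ~ ((\int[P]_x x%:E)%E \is a fin_num) by case: (\int[P]_x x%:E)%E.
rewrite -integral_fin_num_abs // => intP; apply: nintP.
by apply/integrableP; split => //; exact/measurable_EFinP.
Qed.

Lemma maxr0_lipschitz (a b : R) :
  `|Num.max a 0 - Num.max b 0| <= `|a - b|.
Proof.
have [a0|a0] := leP a 0; have [b0|b0] := leP b 0.
all: rewrite ?(max_r a0) ?(max_l (ltW a0)) ?(max_r b0) ?(max_l (ltW b0)).
- by rewrite subrr normr0.
- by rewrite sub0r normrN gtr0_norm // ler_normr; apply/orP; right; lra.
- by rewrite subr0 gtr0_norm // ler_normr; apply/orP; left; lra.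
- by [].
Qed.

(* [mean] is [0] when the first moment is infinite; a finite-cost coupling
   makes this happen for [P] and [Q] simultaneously. *)
Lemma coupling_mean_maxr0 P Q zeta c :
  coupling P Q zeta -> transport_cost zeta = c%:E ->
  `|Num.max (mean P) 0 - Num.max (mean Q) 0| <= c.
Proof.
move=> cpl costE; have [zetaP zetaQ] := cpl.
apply: le_trans (maxr0_lipschitz _ _) _.
have cost_fin : (\int[zeta]_z (`|z.1 - z.2|)%:E < +oo)%E.
  by rewrite [X in (X < _)%E]costE ltry.
have cost_fin' : (\int[zeta]_z (`|z.2 - z.1|)%:E < +oo)%E.
  by under eq_integral do rewrite distrC.
have [intP|nintP] := pselect (P.-integrable setT (EFin \o id)).
  have intQ := has_image_integrable_id measurable_fst measurable_snd
    zetaP zetaQ cost_fin intP.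
  have id_lip (x y : R) : `|id x - id y| <= 1 * `|x - y| by rewrite mul1r.
  have := coupling_Rintegral_lipschitz cpl costE (@measurable_id _ _ setT)
    intP intQ id_lip.
  by rewrite mul1r.
have nintQ : ~ Q.-integrable setT (EFin \o id).
  by move/(has_image_integrable_id measurable_snd measurable_fst
    zetaQ zetaP cost_fin').
rewrite (mean_nonintegrable nintP) (mean_nonintegrable nintQ) subrr normr0.
by rewrite -lee_fin -costE transport_cost_ge0.
Qed.

End Couplings.

Section ProductMeasure.
Context {R : realType}.

Definition tcons {n} (p : R * n.-tuple R) : n.+1.-tuple R :=
  [tuple of p.1 :: p.2].

Lemma measurable_tcons n : measurable_fun setT (@tcons n).
Proof. exact: measurable_cons. Qed.

HB.instance Definition _ n :=
  isMeasurableFun.Build _ _ _ _ (@tcons n) (measurable_tcons n).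

Lemma prodk_probability (P : probability R R) n :
  exists mu : probability (n.-tuple R) R, prodk P n = mu.
Proof.
elim: n => [|n [mu muE]]; first by exists (\d_([tuple] : 0.-tuple R)).
by exists (distribution (P \x mu)%E (@tcons n)); rewrite /= muE.
Qed.

Definition dist1 {n} (z z' : n.-tuple R) : R :=
  \sum_(i < n) `|tnth z i - tnth z' i|.

Lemma dist1_tcons_head (x x' : R) {n} (y : n.-tuple R) :
  dist1 (tcons (x, y)) (tcons (x', y)) = `|x - x'|.
Proof.
rewrite /dist1 big_ord_recl /= big1 ?addr0 // => i _.
by rewrite /tcons !tnthS subrr normr0.
Qed.

Lemma dist1_tcons_tail (x : R) {n} (y y' : n.-tuple R) :
  dist1 (tcons (x, y)) (tcons (x, y')) = dist1 y y'.
Proof.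
rewrite /dist1 big_ord_recl /= subrr normr0 add0r.
by apply: eq_bigr => i _; rewrite /tcons !tnthS.
Qed.

Lemma measurable_tcons_section {n} {g : n.+1.-tuple R -> R} (x : R) :
  measurable_fun setT g -> measurable_fun setT (fun y => g (tcons (x, y))).
Proof.
move=> mg; apply: measurableT_comp mg _.
exact: measurableT_comp (measurable_tcons n) (pair1_measurable x).
Qed.

Section SectionIntegral.
Context {n : nat} (mu : probability (n.-tuple R) R).
Context {g : n.+1.-tuple R -> R} {M : R}.
Hypotheses (mg : measurable_fun setT g) (gM : forall z, `|g z| <= M).

Let section_integrable x :
  mu.-integrable setT (EFin \o (fun y => g (tcons (x, y)))).
Proof.
exact (bounded_integrable mu (measurable_tcons_section x mg) (fun y => gM _)).
Qed.

Let fubini_sectionE :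
  fubini_F mu (EFin \o (g \o @tcons n)) =
  (fun x => (\int[mu]_y g (tcons (x, y)))%:E).
Proof.
apply/funext => x; rewrite /fubini_F /Rintegral fineK //.
exact: integrable_fin_num (section_integrable x).
Qed.

Let product_integrable (P : probability R R) :
  (P \x mu)%E.-integrable setT (EFin \o (g \o @tcons n)).
Proof.
have mgc : measurable_fun setT (g \o @tcons n).
  exact: measurableT_comp mg (measurable_tcons n).
exact (bounded_integrable (P \x mu)%E mgc (fun z => gM _)).
Qed.

Lemma measurable_section_Rintegral :
  measurable_fun setT (fun x => \int[mu]_y g (tcons (x, y))).
Proof.
(* Fubini needs a first factor; any probability on [R] will do. *)
apply/measurable_EFinP.
have := measurable_fubini_F (product_integrable \d_(0 : R)).
by rewrite fubini_sectionE.
Qed.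

Lemma integral_pushforward_tcons (P : probability R R) :
  (\int[pushforward (P \x mu)%E (@tcons n)]_z (g z)%:E)%E =
  (\int[P]_x (\int[mu]_y g (tcons (x, y)))%:E)%E.
Proof.
rewrite (integral_pushforward (phi := @tcons n)) //.
- rewrite -fubini_sectionE preimage_setT.
  by rewrite (integral12_prod_meas1 (product_integrable P)).
- exact/measurable_EFinP.
- by rewrite preimage_setT; exact: product_integrable.
Qed.

Lemma section_Rintegral_lipschitz (L : R) :
  (forall z z', `|g z - g z'| <= L * dist1 z z') ->
  forall x x', `|\int[mu]_y g (tcons (x, y)) - \int[mu]_y g (tcons (x', y))|
    <= L * `|x - x'|.
Proof.
move=> gL x x'.
have gxx' y : `|g (tcons (x, y)) - g (tcons (x', y))| <= L * `|x - x'|.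
  by rewrite -(dist1_tcons_head x x' y); exact: gL.
exact (dist_Rintegral_le mu (measurable_tcons_section x mg)
  (measurable_tcons_section x' mg) (fun y => gM _) (fun y => gM _) gxx').
Qed.

End SectionIntegral.

Lemma prodk_Rintegral_lipschitz {P Q : probability R R}
    {zeta : probability (R * R)%type R} {c : R}
    {n} {g : n.-tuple R -> R} {M L : R} :
  coupling P Q zeta -> transport_cost zeta = c%:E ->
  measurable_fun setT g -> (forall z, `|g z| <= M) ->
  (forall z z', `|g z - g z'| <= L * dist1 z z') ->
  `|fine (\int[prodk P n]_z (g z)%:E)%E - fine (\int[prodk Q n]_z (g z)%:E)%E|
    <= n%:R * L * c.
Proof.
move=> cpl costE; elim: n g M L => [|n IH] g M L mg gM gL.
  by rewrite subrr normr0 !mul0r.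
have [muP muPE] := prodk_probability P n.
have [muQ muQE] := prodk_probability Q n.
rewrite /= muPE muQE (integral_pushforward_tcons muP mg gM).
rewrite (integral_pushforward_tcons muQ mg gM).
pose GP x := \int[muP]_y g (tcons (x, y)).
pose GQ x := \int[muQ]_y g (tcons (x, y)).
have mGP : measurable_fun setT GP := measurable_section_Rintegral muP mg gM.
have mGQ : measurable_fun setT GQ := measurable_section_Rintegral muQ mg gM.
have GPM x : `|GP x| <= M :=
  normr_Rintegral_le muP (measurable_tcons_section x mg) (fun y => gM _).
have GQM x : `|GQ x| <= M :=
  normr_Rintegral_le muQ (measurable_tcons_section x mg) (fun y => gM _).
have GPQ x : `|GP x - GQ x| <= n%:R * L * c.
  have := IH _ M L (measurable_tcons_section x mg) (fun y => gM _).
  by rewrite muPE muQE; apply=> y y'; rewrite -(dist1_tcons_tail x); exact: gL.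
have swap_tail : `|\int[P]_x GP x - \int[P]_x GQ x| <= n%:R * L * c.
  exact (dist_Rintegral_le P mGP mGQ GPM GQM GPQ).
have swap_head : `|\int[P]_x GQ x - \int[Q]_x GQ x| <= L * c.
  exact (coupling_Rintegral_lipschitz cpl costE mGQ
    (bounded_integrable P mGQ GQM) (bounded_integrable Q mGQ GQM)
    (section_Rintegral_lipschitz muQ mg gM L gL)).
have -> : \int[P]_x GP x - \int[Q]_x GQ x =
    (\int[P]_x GP x - \int[P]_x GQ x) + (\int[P]_x GQ x - \int[Q]_x GQ x).
  by rewrite addrA subrK.
apply: le_trans (ler_normD _ _) _; apply: le_trans (lerD swap_tail swap_head) _.
by rewrite -[n.+1]addn1 natrD !mulrDl mul1r.
Qed.

End ProductMeasure.

Section Statistic.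
Context {R : realType}.
Variable k : nat.
Hypothesis k_gt0 : (0 < k)%N.
Local Notation s := (Num.sqrt (k%:R : R)).

Lemma measurable_Tk (P : probability R R) : measurable_fun setT (Tk k P).
Proof.
have msum : measurable_fun setT (fun z : k.-tuple R => \sum_(i < k) tnth z i).
  by apply: measurable_sum => i; exact: measurable_tnth.
apply: measurable_funM => //; apply: measurable_funB => //.
apply: measurable_maxr => //; apply: measurableT_comp msum.
exact: mulrl_measurable.
Qed.

Lemma Tk_lipschitz (P : probability R R) (z z' : k.-tuple R) :
  `|Tk k P z - Tk k P z'| <= s / k%:R * dist1 z z'.
Proof.
rewrite /Tk -mulrBr normrM ger0_norm ?sqrtr_ge0 // -mulrA.
rewrite ler_wpM2l ?sqrtr_ge0 //.
rewrite opprB addrA subrK; apply: le_trans (maxr0_lipschitz _ _) _.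
rewrite -mulrBr -sumrB normrM ger0_norm ?invr_ge0 // ler_wpM2l ?invr_ge0 //.
exact: ler_norm_sum.
Qed.

Lemma Tk_dist_mean (P Q : probability R R) (z : k.-tuple R) :
  `|Tk k P z - Tk k Q z| = s * `|Num.max (mean P) 0 - Num.max (mean Q) 0|.
Proof.
rewrite /Tk -mulrBr normrM ger0_norm ?sqrtr_ge0 // distrC.
by rewrite opprB addrC addrA subrK.
Qed.

Lemma psik_integral {P : probability R R} {mu : probability (k.-tuple R) R}
    {f : R -> R} {M : R} :
  prodk P k = mu -> measurable_fun setT f -> (forall x, `|f x| <= M) ->
  (\int[psik k P]_x (f x)%:E = (\int[mu]_z f (Tk k P z))%:E)%E.
Proof.
move=> muE mf fM.
have mfT : measurable_fun setT (f \o Tk k P).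
  exact: measurableT_comp mf (measurable_Tk P).
have intfT := bounded_integrable mu mfT (fun z => fM _).
rewrite /psik muE (integral_pushforward (phi := Tk k P)) //.
- by rewrite preimage_setT /Rintegral fineK //; exact: integrable_fin_num intfT.
- exact: measurable_Tk.
- exact/measurable_EFinP.
Qed.

Lemma psik_LB_coupling (P Q : probability R R)
    (zeta : probability (R * R)%type R) (c : R) (f : R -> R) :
  coupling P Q zeta -> transport_cost zeta = c%:E -> LB f ->
  (`|\int[psik k P]_x (f x)%:E - \int[psik k Q]_x (f x)%:E|
    <= (2 * s * c)%:E)%E.
Proof.
move=> cpl costE [f1 fL].
have [muP muPE] := prodk_probability P k.
have [muQ muQE] := prodk_probability Q k.
have mf : measurable_fun setT f.
  by apply: continuous_measurable_fun; exact: lipschitz1_continuous.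
have mfT P' : measurable_fun setT (f \o Tk k P').
  exact: measurableT_comp mf (measurable_Tk P').
rewrite (psik_integral muPE mf f1) (psik_integral muQE mf f1) -EFinB lee_fin.
have -> : \int[muP]_z f (Tk k P z) - \int[muQ]_z f (Tk k Q z) =
    (\int[muP]_z f (Tk k P z) - \int[muQ]_z f (Tk k P z)) +
    (\int[muQ]_z f (Tk k P z) - \int[muQ]_z f (Tk k Q z)).
  by rewrite addrA subrK.
rewrite -mulrA mulr_natl mulr2n; apply: le_trans (ler_normD _ _) (lerD _ _).
- have fT_lip z z' : `|f (Tk k P z) - f (Tk k P z')| <= s / k%:R * dist1 z z'.
    exact: le_trans (fL _ _) (Tk_lipschitz P z z').
  have := prodk_Rintegral_lipschitz cpl costE (mfT P) (fun z => f1 _) fT_lip.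
  rewrite muPE muQE => /le_trans; apply.
  by rewrite [_ * (s / _)]mulrC divfK // pnatr_eq0 -lt0n.
- have fT_dist z : `|f (Tk k P z) - f (Tk k Q z)| <= s * c.
    apply: le_trans (fL _ _) _; rewrite Tk_dist_mean ler_wpM2l ?sqrtr_ge0 //.
    exact: coupling_mean_maxr0 cpl costE.
  exact (dist_Rintegral_le muQ (mfT P) (mfT Q) (fun z => f1 _) (fun z => f1 _)
    fT_dist).
Qed.

Lemma LBdist_psik_le_cost (P Q : probability R R)
    (zeta : probability (R * R)%type R) :
  coupling P Q zeta ->
  (LBdist (psik k P) (psik k Q) <= (2 * s)%:E * transport_cost zeta)%E.
Proof.
move=> cpl; have := transport_cost_ge0 zeta.
case costE : (transport_cost zeta) => [c| |] // _.
  apply: ge_ereal_sup => _ [f LBf <-]; rewrite -EFinM.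
  exact: psik_LB_coupling cpl costE LBf.
by rewrite gt0_muley ?leey // lte_fin mulr_gt0 // sqrtr_gt0 ltr0n.
Qed.

End Statistic.

Theorem proposition3 (R : realType) (k : nat) (P Q : probability R R) :
  (0 < k)%N -> inMD P -> inMD Q ->
  (LBdist (psik k P) (psik k Q) <= (2 * Num.sqrt (k%:R))%:E * W1 P Q)%E.
Proof.
move=> k_gt0 _ _.
have s_gt0 : 0 < 2 * Num.sqrt (k%:R : R) by rewrite mulr_gt0 // sqrtr_gt0 ltr0n.
rewrite /W1 -ereal_inf_pZl //.
apply: le_ereal_inf_tmp => _ [_ [zeta cpl <-] <-].
exact: LBdist_psik_le_cost.
Qed.
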